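(* Let $\beta>0$ and let $p=\lfloor\beta\rfloor$. Then $\Phi_\beta(p,0)=1$ and $\Phi_\beta(p+1,0)<1$.
   Context: For $\beta>0$, $W_\beta$ is the random walk on $\mathbb{Z}^2$ starting at the origin which, independently at each step, moves from $(a,b)$ to $(a+1,b)$ with probability $1/(\beta+1)$ and to $(a,b+1)$ with probability $\beta/(\beta+1)$. For a nonnegative integer $q$, $\Phi_\beta(q,0)$ is the probability that $W_\beta$ visits at least one of the lattice points $(n,qn+1)$, $n\ge 0$ (i.e. crosses the line $y=qx$). *)

From Stdlib Require Import Reals Lra List Arith.
Open Scope R_scope.

(* A path of the walk W_beta with N steps is a list of N booleans:
   true  = step (a,b) -> (a,b+1), probability beta/(beta+1);
   false = step (a,b) -> (a+1,b), probability 1/(beta+1). *)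

Fixpoint all_paths (N : nat) : list (list bool) :=
  match N with
  | O => nil :: nil
  | S n => map (cons true) (all_paths n) ++ map (cons false) (all_paths n)
  end.

Definition step_prob (beta : R) (x : bool) : R :=
  if x then beta / (beta + 1) else 1 / (beta + 1).

Fixpoint path_prob (beta : R) (s : list bool) : R :=
  match s with
  | nil => 1
  | x :: t => step_prob beta x * path_prob beta t
  end.

Fixpoint hits (q a b : nat) (s : list bool) : bool :=
  if Nat.eqb b (q * a + 1) then true
  else match s with
       | nil => false
       | x :: t => if x then hits q a (S b) t else hits q (S a) b t
       end.

Definition hit_prob_upto (beta : R) (q N : nat) : R :=
  fold_right Rplus 0
    (map (fun s => path_prob beta s * (if hits q 0 0 s then 1 else 0))
         (all_paths N)).

(* Phi_beta(q,0) = l : the probability of the (countable increasing union of)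
   events "visits some (n,qn+1) within N steps", i.e. the limit as N -> oo. *)
Definition Phi_is (beta : R) (q : nat) (l : R) : Prop :=
  Un_cv (hit_prob_upto beta q) l.

(* The walk W_beta crosses the line y = q x exactly when its offset
   d = b - q a, which starts at 0, reaches 1.  The offset performs a
   one-dimensional walk moving +1 with probability c = beta/(beta+1) and -q
   with probability c' = 1/(beta+1); its drift c - q c' is non-negative iff
   q <= beta. *)

From Stdlib Require Import Reals Lra Lia ZArith List.
Open Scope R_scope.

Definition path_sum (N : nat) (f : list bool -> R) : R :=
  fold_right Rplus 0 (map f (all_paths N)).

Lemma fold_right_Rplus_app (l1 l2 : list R) :
  fold_right Rplus 0 (l1 ++ l2) = fold_right Rplus 0 l1 + fold_right Rplus 0 l2.
Proof. induction l1 as [|x l1 IH]; simpl; [ring | rewrite IH; ring]. Qed.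

Lemma path_sum_S (N : nat) (f : list bool -> R) :
  path_sum (S N) f =
  path_sum N (fun s => f (true :: s)) + path_sum N (fun s => f (false :: s)).
Proof.
  unfold path_sum; simpl.
  rewrite map_app, fold_right_Rplus_app, !map_map; reflexivity.
Qed.

Lemma path_sum_ext (N : nat) (f g : list bool -> R) :
  (forall s, f s = g s) -> path_sum N f = path_sum N g.
Proof. intros Hfg; unfold path_sum; rewrite (map_ext f g Hfg); reflexivity. Qed.

Lemma path_sum_scal (N : nat) (a : R) (f : list bool -> R) :
  path_sum N (fun s => a * f s) = a * path_sum N f.
Proof.
  revert f; induction N as [|N IH]; intros f.
  - unfold path_sum; simpl; ring.
  - rewrite !path_sum_S, (IH (fun s => f (true :: s))), (IH (fun s => f (false :: s))).
    ring.
Qed.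

Lemma path_sum_prob (beta : R) (N : nat) :
  0 < beta -> path_sum N (path_prob beta) = 1.
Proof.
  intros Hb; induction N as [|N IH].
  - unfold path_sum; simpl; ring.
  - rewrite path_sum_S.
    change (path_sum N (fun s => step_prob beta true * path_prob beta s) +
            path_sum N (fun s => step_prob beta false * path_prob beta s) = 1).
    rewrite !path_sum_scal, IH; unfold step_prob; field; lra.
Qed.

(* The offset of (a,b) from the line is b - q a. *)
Fixpoint reach (c c' : R) (q N : nat) (d : Z) : R :=
  if Z.eqb d 1 then 1
  else match N with
       | O => 0
       | S n => c * reach c c' q n (d + 1) + c' * reach c c' q n (d - Z.of_nat q)
       end.

Lemma reach_eq (c c' : R) (q N : nat) (d : Z) :
  reach c c' q N d =
  if Z.eqb d 1 then 1
  else match N with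
       | O => 0
       | S n => c * reach c c' q n (d + 1) + c' * reach c c' q n (d - Z.of_nat q)
       end.
Proof. destruct N; reflexivity. Qed.

Lemma hits_eq (q a b : nat) (s : list bool) :
  hits q a b s =
  if Nat.eqb b (q * a + 1) then true
  else match s with
       | nil => false
       | x :: t => if x then hits q a (S b) t else hits q (S a) b t
       end.
Proof. destruct s; reflexivity. Qed.

Lemma on_line_offset (q a b : nat) :
  Nat.eqb b (q * a + 1) = Z.eqb (Z.of_nat b - Z.of_nat q * Z.of_nat a) 1.
Proof.
  destruct (Nat.eqb_spec b (q * a + 1)), (Z.eqb_spec (Z.of_nat b - Z.of_nat q * Z.of_nat a) 1);
    reflexivity || (exfalso; nia).
Qed.

(* Hitting the line only depends on the offset, which performs the walk [reach]. *)
Lemma path_sum_hits (beta : R) (q N : nat) : 0 < beta -> forall a b,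
  path_sum N (fun s => path_prob beta s * (if hits q a b s then 1 else 0)) =
  reach (beta / (beta + 1)) (1 / (beta + 1)) q N
        (Z.of_nat b - Z.of_nat q * Z.of_nat a).
Proof.
  intros Hb; induction N as [|N IH]; intros a b;
    rewrite reach_eq, <- on_line_offset; destruct (Nat.eqb b (q * a + 1)) eqn:Ehit.
  - unfold path_sum; simpl; rewrite Ehit; ring.
  - unfold path_sum; simpl; rewrite Ehit; ring.
  - transitivity (path_sum (S N) (path_prob beta)); [|exact (path_sum_prob beta (S N) Hb)].
    apply path_sum_ext; intros s; rewrite hits_eq, Ehit; ring.
  - rewrite path_sum_S.
    rewrite (path_sum_ext N _ (fun s => beta / (beta + 1) *
               (path_prob beta s * (if hits q a (S b) s then 1 else 0))))
      by (intros s; rewrite hits_eq, Ehit; simpl; unfold step_prob; ring).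
    rewrite (path_sum_ext N (fun s => path_prob beta (false :: s) * _)
               (fun s => 1 / (beta + 1) *
               (path_prob beta s * (if hits q (S a) b s then 1 else 0))))
      by (intros s; rewrite hits_eq, Ehit; simpl; unfold step_prob; ring).
    rewrite !path_sum_scal, !IH.
    do 2 f_equal; [f_equal | f_equal]; lia.
Qed.

Lemma hit_prob_reach (beta : R) (q N : nat) : 0 < beta ->
  hit_prob_upto beta q N = reach (beta / (beta + 1)) (1 / (beta + 1)) q N 0.
Proof.
  intros Hb; etransitivity; [exact (path_sum_hits beta q N Hb 0 0) |].
  f_equal; lia.
Qed.

Lemma pow_le_exp_decr (g : R) (m n : nat) :
  0 <= g <= 1 -> (m <= n)%nat -> g ^ n <= g ^ m.
Proof.
  intros Hg Hmn; induction Hmn as [|n Hmn IH]; [lra |].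
  simpl; assert (0 <= g ^ n) by (apply pow_le; lra); nra.
Qed.

Section ReachWalk.
Variables (c c' : R) (q : nat).
Hypotheses (Hc : 0 <= c) (Hc' : 0 <= c') (Hcc : c + c' = 1).

Lemma reach_bounds (N : nat) (d : Z) : 0 <= reach c c' q N d <= 1.
Proof.
  revert d; induction N as [|N IH]; intros d; rewrite reach_eq;
    destruct (Z.eqb d 1); try lra.
  destruct (IH (d + 1)%Z), (IH (d - Z.of_nat q)%Z); nra.
Qed.

Lemma reach_growing (d : Z) : Un_growing (fun N => reach c c' q N d).
Proof.
  intros N; revert d; induction N as [|N IH]; intros d.
  - rewrite (reach_eq c c' q 1 d), (reach_eq c c' q 0 d); destruct (Z.eqb d 1); [lra |].
    destruct (reach_bounds 0 (d + 1)), (reach_bounds 0 (d - Z.of_nat q)); nra.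
  - rewrite (reach_eq c c' q (S (S N)) d), (reach_eq c c' q (S N) d).
    destruct (Z.eqb d 1); [lra |].
    pose proof (IH (d + 1)%Z); pose proof (IH (d - Z.of_nat q)%Z).
    apply Rplus_le_compat; apply Rmult_le_compat_l; lra.
Qed.

(* Exponential supermartingale: if [lam > 1] satisfies
   [c lam + c' lam^-q <= 1], then from offset [d <= 1] the walk reaches 1
   with probability at most [lam^(d-1)]. *)
Lemma reach_exp_bound (lam : R) :
  1 < lam -> c * lam + c' * / lam ^ q <= 1 ->
  forall N d, (d <= 1)%Z -> reach c c' q N d <= / lam ^ Z.to_nat (1 - d).
Proof.
  intros Hlam Hsuper N; induction N as [|N IH]; intros d Hd; rewrite reach_eq;
    destruct (Z.eqb_spec d 1) as [->|Hd1]; try (simpl; lra).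
  - left; apply Rinv_0_lt_compat, pow_lt; lra.
  - set (k := Z.to_nat (1 - (d + 1))).
    assert (Ek : Z.to_nat (1 - d) = S k) by (unfold k; lia).
    assert (Ekq : Z.to_nat (1 - (d - Z.of_nat q)) = (S k + q)%nat) by (unfold k; lia).
    pose proof (IH (d + 1)%Z ltac:(lia)) as Hup.
    pose proof (IH (d - Z.of_nat q)%Z ltac:(lia)) as Hdown.
    fold k in Hup; rewrite Ekq, pow_add in Hdown; rewrite Ek.
    assert (0 < lam ^ k) by (apply pow_lt; lra).
    assert (0 < lam ^ q) by (apply pow_lt; lra).
    simpl in Hdown |- *.
    apply Rle_trans with (c * / lam ^ k + c' * / (lam * lam ^ k * lam ^ q)).
    { apply Rplus_le_compat; apply Rmult_le_compat_l; lra. }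
    replace (c * / lam ^ k + c' * / (lam * lam ^ k * lam ^ q))
      with ((c * lam + c' * / lam ^ q) * / (lam * lam ^ k)) by (field; lra).
    rewrite <- (Rmult_1_l (/ (lam * lam ^ k))) at 2.
    apply Rmult_le_compat_r; [left; apply Rinv_0_lt_compat; nra | exact Hsuper].
Qed.

End ReachWalk.

Definition linear_cap (K : nat) (d : Z) : R := Rmin 1 ((1 - IZR d) / (1 + INR K)).

(* Geometric potential [1 + g + ... + g^(-d)] for [d <= 0], bounded by 1/(1-g). *)
Definition geom_pot (g : R) (d : Z) : R := (1 - g ^ Z.to_nat (1 - d)) / (1 - g).

Lemma linear_cap_nonneg (K : nat) (d : Z) : (d <= 1)%Z -> 0 <= linear_cap K d.
Proof.
  intros Hd; unfold linear_cap; apply Rmin_glb; [lra |].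
  apply IZR_le in Hd; pose proof (pos_INR K).
  apply Rle_mult_inv_pos; lra.
Qed.

Lemma linear_cap_far (K : nat) (d : Z) : (d <= - Z.of_nat K)%Z -> linear_cap K d = 1.
Proof.
  intros Hd; unfold linear_cap; apply Rmin_left.
  apply IZR_le in Hd; rewrite opp_IZR, <- INR_IZR_INZ in Hd; pose proof (pos_INR K).
  apply (Rmult_le_reg_r (1 + INR K)); [lra |].
  unfold Rdiv; rewrite Rmult_assoc, Rinv_l by lra; lra.
Qed.

Lemma linear_cap_near (K : nat) (d : Z) :
  (- Z.of_nat K < d)%Z -> linear_cap K d = (1 - IZR d) / (1 + INR K).
Proof.
  intros Hd; unfold linear_cap; apply Rmin_right.
  apply IZR_lt in Hd; rewrite opp_IZR, <- INR_IZR_INZ in Hd; pose proof (pos_INR K).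
  apply (Rmult_le_reg_r (1 + INR K)); [lra |].
  unfold Rdiv; rewrite Rmult_assoc, Rinv_l by lra; lra.
Qed.

Lemma geom_pot_nonneg (g : R) (d : Z) : 0 <= g < 1 -> 0 <= geom_pot g d.
Proof.
  intros Hg; unfold geom_pot; apply Rle_mult_inv_pos; [| lra].
  pose proof (pow_le_exp_decr g 0 (Z.to_nat (1 - d)) ltac:(lra) ltac:(lia)); simpl in *; lra.
Qed.

Lemma geom_pot_ge_1 (g : R) (d : Z) : 0 <= g < 1 -> (d <= 0)%Z -> 1 <= geom_pot g d.
Proof.
  intros Hg Hd; unfold geom_pot.
  apply (Rmult_le_reg_r (1 - g)); [lra |].
  unfold Rdiv; rewrite Rmult_assoc, Rinv_l, Rmult_1_l by lra.
  pose proof (pow_le_exp_decr g 1 (Z.to_nat (1 - d)) ltac:(lra) ltac:(lia)).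
  rewrite pow_1 in *; lra.
Qed.

Lemma geom_pot_0 (g : R) : g <> 1 -> geom_pot g 0 = 1.
Proof. intros Hg; unfold geom_pot; simpl; field; lra. Qed.

Section Recurrence.
Variables (c c' : R) (q : nat).
Hypotheses (Hc : 0 < c) (Hc' : 0 <= c') (Hcc : c + c' = 1).

(* On the window the walk exits within [K] up-steps with probability at
   least [(c/2)^K]; the geometric potential records this contraction. *)
Lemma geom_pot_contract (K : nat) (d : Z) : (- Z.of_nat K < d <= 0)%Z ->
  c * geom_pot (c / 2) (d + 1) + c' * geom_pot (c / 2) (d - Z.of_nat q)
  <= (1 - (c / 2) ^ K) * geom_pot (c / 2) d.
Proof.
  intros Hd; set (g := c / 2); unfold geom_pot.
  set (j := Z.to_nat (1 - (d + 1))).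
  assert (Ej : Z.to_nat (1 - d) = S j) by (unfold j; lia).
  assert (Ejq : Z.to_nat (1 - (d - Z.of_nat q)) = (S j + q)%nat) by (unfold j; lia).
  assert (HjK : (S j <= K)%nat) by (unfold j; lia).
  rewrite Ej, Ejq, pow_add.
  assert (Hg : 0 < g <= 1 / 2) by (unfold g; lra).
  assert (0 <= g ^ j) by (apply pow_le; lra).
  assert (0 <= g ^ q) by (apply pow_le; lra).
  assert (0 <= g ^ K) by (apply pow_le; lra).
  pose proof (pow_le_exp_decr g (S j) K ltac:(lra) HjK) as HgK.
  simpl in HgK |- *.
  apply (Rmult_le_reg_r (1 - g)); [lra |].
  replace ((c * ((1 - g ^ j) / (1 - g)) + c' * ((1 - g * g ^ j * g ^ q) / (1 - g))) * (1 - g))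
    with (c * (1 - g ^ j) + c' * (1 - g * g ^ j * g ^ q)) by (field; lra).
  replace ((1 - g ^ K) * ((1 - g * g ^ j) / (1 - g)) * (1 - g))
    with ((1 - g ^ K) * (1 - g * g ^ j)) by (field; lra).
  assert (Ec : c = 2 * g) by (unfold g; lra); rewrite Ec.
  assert (0 <= g * g ^ j) by nra.
  assert (0 <= c' * (g * g ^ j * g ^ q)) by (apply Rmult_le_pos; [lra | nra]).
  assert (0 <= g ^ K * (g * g ^ j)) by nra.
  nra.
Qed.

(* Non-negative drift [c - q c' >= 0] makes the linear part superharmonic
   on the window (-K, 0]. *)
Hypothesis Hdrift : c' * INR q <= c.

Lemma linear_cap_superharmonic (K : nat) (d : Z) : (- Z.of_nat K < d <= 0)%Z ->
  c * linear_cap K (d + 1) + c' * linear_cap K (d - Z.of_nat q) <= linear_cap K d.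
Proof.
  intros Hd; rewrite (linear_cap_near K d) by lia; pose proof (pos_INR K).
  apply Rle_trans with (c * ((1 - IZR (d + 1)) / (1 + INR K)) +
                        c' * ((1 - IZR (d - Z.of_nat q)) / (1 + INR K))).
  { apply Rplus_le_compat; apply Rmult_le_compat_l; try lra; apply Rmin_r. }
  rewrite plus_IZR, minus_IZR, <- INR_IZR_INZ.
  apply (Rmult_le_reg_r (1 + INR K)); [lra |].
  field_simplify; [nra | lra | lra].
Qed.

(* Escape bound: failing to reach 1 in [N] steps requires either leaving
   the window below (probability at most [linear_cap]) or staying in it
   for [N] steps (geometrically unlikely). *)
Lemma reach_escape_bound (K N : nat) (d : Z) : (d <= 1)%Z ->
  1 - reach c c' q N d
  <= linear_cap K d + (1 - (c / 2) ^ K) ^ N * geom_pot (c / 2) d.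
Proof.
  set (g := c / 2); set (th := 1 - g ^ K).
  assert (Hg : 0 <= g < 1) by (unfold g; lra).
  assert (Hth : 0 <= th <= 1).
  { unfold th; pose proof (pow_le_exp_decr g 0 K ltac:(lra) ltac:(lia)).
    assert (0 <= g ^ K) by (apply pow_le; lra); simpl in *; lra. }
  revert d; induction N as [|N IH]; intros d Hd; rewrite reach_eq;
    pose proof (linear_cap_nonneg K d Hd); pose proof (geom_pot_nonneg g d Hg);
    destruct (Z.eqb_spec d 1) as [Hd1 | Hd1].
  - simpl; lra.
  - pose proof (geom_pot_ge_1 g d Hg ltac:(lia)); simpl; lra.
  - assert (0 <= th ^ S N) by (apply pow_le; lra); nra.
  - assert (0 <= th ^ N) by (apply pow_le; lra).
    destruct (Z_le_gt_dec d (- Z.of_nat K)) as [Hfar | Hnear].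
    + rewrite (linear_cap_far K d Hfar).
      destruct (reach_bounds c c' q ltac:(lra) Hc' Hcc N (d + 1)),
               (reach_bounds c c' q ltac:(lra) Hc' Hcc N (d - Z.of_nat q)).
      assert (0 <= th ^ S N * geom_pot g d) by (apply Rmult_le_pos; [apply pow_le|]; lra).
      nra.
    + pose proof (IH (d + 1)%Z ltac:(lia)) as Hup.
      pose proof (IH (d - Z.of_nat q)%Z ltac:(lia)) as Hdown.
      pose proof (linear_cap_superharmonic K d ltac:(lia)) as HV.
      pose proof (geom_pot_contract K d ltac:(lia)) as HU; fold g th in HU.
      replace (1 - (c * reach c c' q N (d + 1) + c' * reach c c' q N (d - Z.of_nat q)))
        with (c * (1 - reach c c' q N (d + 1)) + c' * (1 - reach c c' q N (d - Z.of_nat q)))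
        by (replace c' with (1 - c) by lra; ring).
      apply Rle_trans with (c * (linear_cap K (d + 1) + th ^ N * geom_pot g (d + 1)) +
                            c' * (linear_cap K (d - Z.of_nat q) +
                                  th ^ N * geom_pot g (d - Z.of_nat q))).
      { apply Rplus_le_compat; apply Rmult_le_compat_l; lra. }
      simpl; nra.
Qed.

Lemma reach_recurrent : Un_cv (fun N => reach c c' q N 0) 1.
Proof.
  intros eps Heps.
  destruct (INR_unbounded (2 / eps)) as [K0 HK0].
  set (K := S K0).
  assert (HK : 2 / eps < INR K) by (unfold K; rewrite S_INR; lra).
  assert (HK1 : (1 <= K)%nat) by (unfold K; lia).
  clearbody K; pose proof (pos_INR K).
  set (th := 1 - (c / 2) ^ K).
  assert (HgK : 0 < (c / 2) ^ K <= 1).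
  { split; [apply pow_lt; lra |].
    apply (pow_le_exp_decr (c / 2) 0 K); [lra | lia]. }
  destruct (pow_lt_1_zero th ltac:(unfold th; rewrite Rabs_right; lra) (eps / 2)
              ltac:(lra)) as [N HN].
  exists N; intros n Hn.
  pose proof (reach_escape_bound K n 0 ltac:(lia)) as Hesc.
  rewrite linear_cap_near in Hesc by lia.
  rewrite geom_pot_0 in Hesc by (intro; lra).
  pose proof (HN n Hn) as Hth.
  rewrite Rabs_right in Hth by (apply Rle_ge, pow_le; unfold th; lra).
  assert (Hcap : (1 - IZR 0) / (1 + INR K) < eps / 2).
  { apply (Rmult_lt_reg_r (1 + INR K)); [lra |].
    replace ((1 - IZR 0) / (1 + INR K) * (1 + INR K)) with 1 by (field; lra).
    assert (2 / eps * eps = 2) by (field; lra); nra. }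
  pose proof (reach_bounds c c' q ltac:(lra) Hc' Hcc n 0).
  unfold R_dist; rewrite Rabs_left1 by lra; fold th in Hesc; lra.
Qed.

End Recurrence.

Lemma Un_cv_le_bound (u : nat -> R) (l b : R) :
  (forall n, u n <= b) -> Un_cv u l -> l <= b.
Proof.
  intros Hub Hu; apply (Rle_cv_lim Hub Hu).
  intros eps Heps; exists O; intros n _; unfold R_dist; rewrite Rminus_diag, Rabs_R0; lra.
Qed.

Lemma reach_transient (c c' : R) (q : nat) (lam : R) :
  0 <= c -> 0 <= c' -> c + c' = 1 -> 1 < lam -> c * lam + c' * / lam ^ q <= 1 ->
  exists l, Un_cv (fun N => reach c c' q N 0) l /\ l < 1.
Proof.
  intros Hc Hc' Hcc Hlam Hsuper.
  destruct (growing_cv _ (reach_growing c c' q Hc Hc' Hcc 0)) as [l Hl].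
  { exists 1; intros x [N ->]; apply (reach_bounds c c' q Hc Hc' Hcc). }
  exists l; split; [exact Hl |].
  assert (Hle : l <= / lam).
  { apply (Un_cv_le_bound _ _ _) with (2 := Hl); intros N.
    pose proof (reach_exp_bound c c' q Hc Hc' lam Hlam Hsuper N 0 ltac:(lia)) as H.
    simpl in H; rewrite Rmult_1_r in H; exact H. }
  assert (/ lam < 1) by (rewrite <- Rinv_1; apply Rinv_lt_contravar; lra).
  lra.
Qed.

(* If [beta < q], Bernoulli's inequality yields a root [lam > 1] of the
   supermartingale condition for the walk W_beta relative to the slope [q]. *)
Lemma supercritical_lambda (beta : R) (q : nat) : 0 < beta -> beta < INR q ->
  exists lam, 1 < lam /\
    beta / (beta + 1) * lam + 1 / (beta + 1) * / lam ^ q <= 1.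
Proof.
  intros Hb Hq.
  set (eps := (INR q - beta) / (beta * INR q)).
  assert (Heps : 0 < eps) by (unfold eps; apply Rdiv_lt_0_compat; nra).
  exists (1 + eps); split; [lra |].
  assert (Hpow : INR q / beta <= (1 + eps) ^ q).
  { eapply Rle_trans; [| apply poly; exact Heps].
    right; unfold eps; field; lra. }
  assert (Hinv : / (1 + eps) ^ q <= beta / INR q).
  { replace (beta / INR q) with (/ (INR q / beta)) by (field; lra).
    apply Rinv_le_contravar; [apply Rdiv_lt_0_compat |]; lra. }
  apply Rle_trans with (beta / (beta + 1) * (1 + eps) + 1 / (beta + 1) * (beta / INR q)).
  { apply Rplus_le_compat_l, Rmult_le_compat_l; [left; apply Rdiv_lt_0_compat |]; lra. }
  right; unfold eps; field; lra.
Qed.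

Theorem mainTheorem9 (beta : R) (p : nat) :
  0 < beta -> INR p <= beta < INR p + 1 ->
  Phi_is beta p 1 /\ (exists l : R, Phi_is beta (S p) l /\ l < 1).
Proof.
  intros Hb [Hp Hp1].
  set (c := beta / (beta + 1)); set (c' := 1 / (beta + 1)).
  assert (Hc : 0 < c) by (unfold c; apply Rdiv_lt_0_compat; lra).
  assert (Hc' : 0 < c') by (unfold c'; apply Rdiv_lt_0_compat; lra).
  assert (Hcc : c + c' = 1) by (unfold c, c'; field; lra).
  assert (Hphi : forall q l, Un_cv (fun N => reach c c' q N 0) l -> Phi_is beta q l).
  { intros q l Hl; apply (Un_cv_ext _ _ (fun N => eq_sym (hit_prob_reach beta q N Hb)) l Hl). }
  split.
  - (* slope [p <= beta]: non-negative drift, hence recurrence *)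
    assert (Hdrift : c' * INR p <= c).
    { unfold c, c', Rdiv; rewrite Rmult_1_l, Rmult_comm.
      apply Rmult_le_compat_r; [left; apply Rinv_0_lt_compat |]; lra. }
    apply Hphi, (reach_recurrent c c' p Hc (Rlt_le _ _ Hc') Hcc Hdrift).
  -
    destruct (supercritical_lambda beta (S p) Hb ltac:(rewrite S_INR; lra))
      as [lam [Hlam Hsuper]].
    destruct (reach_transient c c' (S p) lam (Rlt_le _ _ Hc) (Rlt_le _ _ Hc') Hcc Hlam Hsuper)
      as [l [Hl Hlt]].
    exists l; split; [apply Hphi, Hl | exact Hlt].
Qed.
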